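(* Let $\Gamma\curvearrowright X, I$ be a dynamical ideal. If it has cofinal orbits, then Player II has a winning strategy in the DC game.
   Context: A dynamical ideal $\Gamma\curvearrowright X, I$: a group $\Gamma$ acting on a set $X$ and an ideal $I$ on $X$ containing all singletons and invariant under the action ($\gamma\cdot a=\{\gamma\cdot x:x\in a\}\in I$ for $a\in I$). For $a\subseteq X$, $\mathrm{pstab}(a)=\{\gamma\in\Gamma:\gamma\cdot x=x\ \forall x\in a\}$. For $a,b\in I$, $b$ is $a$-large if for every $c\in I$ there is $\gamma\in\mathrm{pstab}(a)$ with $c\subseteq\gamma\cdot b$; the dynamical ideal has cofinal orbits if every $a\in I$ has an $a$-large $b\in I$. The DC game: players I and II alternate for $\omega$ rounds; at round $n$ Player I plays $a_n\in I$ and Player II answers with $\gamma_n\in\Gamma$, subject to $\gamma_0=1$ and $\gamma_n$ fixes every element of $\bigcup_{m<n}\gamma_m\cdot a_m$. Player II wins if $\bigcup_n\gamma_n\cdot a_n\in I$. *)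

From Stdlib Require Import List.
Import ListNotations.
Set Implicit Arguments.

Definition subset {X : Type} (a b : X -> Prop) : Prop := forall x, a x -> b x.

Definition is_group {G : Type} (mul : G -> G -> G) (one : G) (inv : G -> G) : Prop :=
  (forall g h k, mul g (mul h k) = mul (mul g h) k) /\
  (forall g, mul one g = g) /\ (forall g, mul g one = g) /\
  (forall g, mul (inv g) g = one) /\ (forall g, mul g (inv g) = one).

Definition is_action {G X : Type} (mul : G -> G -> G) (one : G) (act : G -> X -> X) : Prop :=
  (forall x, act one x = x) /\ (forall g h x, act (mul g h) x = act g (act h x)).

Definition img {G X : Type} (act : G -> X -> X) (g : G) (a : X -> Prop) : X -> Prop :=
  fun y => exists x, a x /\ y = act g x.

Definition is_ideal {X : Type} (I : (X -> Prop) -> Prop) : Prop :=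
  I (fun _ => False) /\
  (forall a b, subset a b -> I b -> I a) /\
  (forall a b, I a -> I b -> I (fun x => a x \/ b x)) /\
  ~ I (fun _ => True).

Definition dynamical_ideal {G X : Type} (mul : G -> G -> G) (one : G) (inv : G -> G)
  (act : G -> X -> X) (I : (X -> Prop) -> Prop) : Prop :=
  is_group mul one inv /\ is_action mul one act /\ is_ideal I /\
  (forall x : X, I (fun y => y = x)) /\
  (forall g a, I a -> I (img act g a)).

Definition pstab {G X : Type} (act : G -> X -> X) (a : X -> Prop) (g : G) : Prop :=
  forall x, a x -> act g x = x.

Definition large {G X : Type} (act : G -> X -> X) (I : (X -> Prop) -> Prop)
  (a b : X -> Prop) : Prop :=
  forall c, I c -> exists g, pstab act a g /\ subset c (img act g b).

Definition cofinal_orbits {G X : Type} (act : G -> X -> X) (I : (X -> Prop) -> Prop) : Prop :=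
  forall a, I a -> exists b, I b /\ large act I a b.

(* A strategy for Player II: given Player I's moves a_0,...,a_n (in order),
   answer gamma_n.  (Player II's own earlier moves are determined by the
   strategy, so they need not be passed.) *)
Definition strategyII (G X : Type) := list (X -> Prop) -> G.

Definition history {X : Type} (a : nat -> X -> Prop) (n : nat) : list (X -> Prop) :=
  map a (seq 0 (S n)).

Definition winningII {G X : Type} (one : G) (act : G -> X -> X)
  (I : (X -> Prop) -> Prop) (sigma : strategyII G X) : Prop :=
  forall a : nat -> X -> Prop, (forall n, I (a n)) ->
    let gam := fun n => sigma (history a n) in
    gam 0 = one /\
    (forall n, pstab act (fun x => exists m, m < n /\ img act (gam m) (a m) x) (gam n)) /\
    I (fun x => exists n, img act (gam n) (a n) x).

From Stdlib Require Import List Arith Lia ClassicalEpsilon.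

(* Player II confines the whole run to the set S := a_0 ∪ b_0, where b_0 is
   a_0-large.  A position consists of the union U of the moves placed so far
   and a spare set r ⊆ S which is U-large.  When Player I plays c, take f
   large over U ∪ r; by largeness of r there is e fixing U with r ∪ f ⊆ e·r.
   Then e⁻¹·r ⊆ r is still U-large, so some element fixing U moves c into
   e⁻¹·r, and e⁻¹·f ⊆ r is large over U ∪ e⁻¹·r, hence over the new union:
   it is the next spare set. *)

Definition union {X : Type} (a b : X -> Prop) : X -> Prop := fun x => a x \/ b x.

Section Largeness.

Variables (G X : Type) (mul : G -> G -> G) (one : G) (inv : G -> G)
  (act : G -> X -> X) (I : (X -> Prop) -> Prop).
Hypothesis Hgroup : is_group mul one inv.
Hypothesis Hact : is_action mul one act.
Hypothesis I_img : forall g a, I a -> I (img act g a).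

Lemma act_mul g h x : act (mul g h) x = act g (act h x).
Proof. apply (proj2 Hact). Qed.

Lemma act_invK g x : act (inv g) (act g x) = x.
Proof.
  destruct Hgroup as (_ & _ & _ & Hinvl & _).
  rewrite <- act_mul, Hinvl. apply (proj1 Hact).
Qed.

Lemma act_Kinv g x : act g (act (inv g) x) = x.
Proof.
  destruct Hgroup as (_ & _ & _ & _ & Hinvr).
  rewrite <- act_mul, Hinvr. apply (proj1 Hact).
Qed.

Lemma pstab_inv a g : pstab act a g -> pstab act a (inv g).
Proof. intros Hg x Hx. rewrite <- (Hg x Hx) at 1. apply act_invK. Qed.

Lemma img_mono g a b : subset a b -> subset (img act g a) (img act g b).
Proof. intros Hab y [x [Hx ->]]. exists x. auto. Qed.

Lemma pstab_subset_img a g : pstab act a g -> subset a (img act g a).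
Proof. intros Hg x Hx. exists x. split; [exact Hx | symmetry; apply Hg, Hx]. Qed.

Lemma subset_img_inv g b c : subset c (img act g b) -> subset (img act (inv g) c) b.
Proof.
  intros Hcb y [x [Hx ->]]. destruct (Hcb x Hx) as [z [Hz ->]].
  rewrite act_invK. exact Hz.
Qed.

Lemma large_subset_l a a' b : subset a' a -> large act I a b -> large act I a' b.
Proof.
  intros Ha Hl c Hc. destruct (Hl c Hc) as [g [Hg Hsub]].
  exists g. split; [intros x Hx; apply Hg, Ha, Hx | exact Hsub].
Qed.

Lemma large_img g a b : large act I a b -> large act I (img act g a) (img act g b).
Proof.
  intros Hl c Hc.
  destruct (Hl (img act (inv g) c) (I_img _ _ Hc)) as [h [Hh Hsub]].
  exists (mul g (mul h (inv g))). split.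
  - intros y [x [Hx ->]]. rewrite !act_mul, act_invK, (Hh x Hx). reflexivity.
  - intros y Hy.
    destruct (Hsub (act (inv g) y)) as [x [Hx Hhx]]; [exists y; auto |].
    exists (act g x). split; [exists x; auto |].
    rewrite !act_mul, act_invK, <- Hhx, act_Kinv. reflexivity.
Qed.

Lemma large_img_pstab g a b :
  pstab act a g -> large act I a b -> large act I a (img act g b).
Proof.
  intros Hg Hl. apply large_subset_l with (img act g a).
  - apply pstab_subset_img, Hg.
  - apply large_img, Hl.
Qed.

End Largeness.

Section Strategy.

Variables (G X : Type) (mul : G -> G -> G) (one : G) (inv : G -> G)
  (act : G -> X -> X) (I : (X -> Prop) -> Prop).
Hypothesis Hgroup : is_group mul one inv.
Hypothesis Hact : is_action mul one act.
Hypothesis Hideal : is_ideal I.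
Hypothesis I_img : forall g a, I a -> I (img act g a).
Hypothesis Hcofinal : cofinal_orbits act I.

Lemma I_subset a b : subset a b -> I b -> I a.
Proof. apply (proj1 (proj2 Hideal)). Qed.

Lemma I_union a b : I a -> I b -> I (union a b).
Proof. apply (proj1 (proj2 (proj2 Hideal))). Qed.

Definition reserve (a : X -> Prop) : X -> Prop :=
  epsilon (inhabits (fun _ => False)) (fun b => I b /\ large act I a b).

Lemma reserve_spec a : I a -> I (reserve a) /\ large act I a (reserve a).
Proof. intros Ha. unfold reserve. apply epsilon_spec, Hcofinal, Ha. Qed.

Definition mover (a b c : X -> Prop) : G :=
  epsilon (inhabits one) (fun g => pstab act a g /\ subset c (img act g b)).

Lemma mover_spec a b c : large act I a b -> I c ->
  pstab act a (mover a b c) /\ subset c (img act (mover a b c) b).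
Proof. intros Hl Hc. unfold mover. apply epsilon_spec, Hl, Hc. Qed.

Record position := Position { covered : X -> Prop; spare : X -> Prop }.

Definition sound (S : X -> Prop) (p : position) : Prop :=
  subset (covered p) S /\ subset (spare p) S /\ large act I (covered p) (spare p).

Definition absorber (p : position) : G :=
  mover (covered p) (spare p) (union (spare p) (reserve (union (covered p) (spare p)))).

Definition answer (p : position) (c : X -> Prop) : G :=
  inv (mover (covered p) (img act (inv (absorber p)) (spare p)) c).

Definition next_position (p : position) (c : X -> Prop) : position :=
  Position (union (covered p) (img act (answer p c) c))
           (img act (inv (absorber p)) (reserve (union (covered p) (spare p)))).

Section Step.

Variables (S : X -> Prop) (p : position) (c : X -> Prop).
Hypotheses (HS : I S) (Hp : sound S p) (Hc : I c).

Lemma I_covered_union_spare : I (union (covered p) (spare p)).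
Proof.
  destruct Hp as (HU & Hr & _).
  apply I_union; apply I_subset with S; assumption.
Qed.

Lemma absorber_spec :
  pstab act (covered p) (absorber p) /\
  subset (spare p) (img act (absorber p) (spare p)) /\
  subset (reserve (union (covered p) (spare p))) (img act (absorber p) (spare p)).
Proof.
  destruct Hp as (_ & Hr & Hl).
  destruct (reserve_spec _ I_covered_union_spare) as [Hf _].
  destruct (mover_spec (covered p) (spare p)
              (union (spare p) (reserve (union (covered p) (spare p)))) Hl)
    as [He Hsub].
  { apply I_union; [apply I_subset with S |]; assumption. }
  split; [exact He |].
  split; intros x Hx; apply Hsub; [left | right]; exact Hx.
Qed.

Lemma answer_spec :
  pstab act (covered p) (answer p c) /\
  subset (img act (answer p c) c) (img act (inv (absorber p)) (spare p)).
Proof.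
  destruct absorber_spec as [He _].
  destruct Hp as (_ & _ & Hl).
  destruct (mover_spec (covered p) (img act (inv (absorber p)) (spare p)) c)
    as [Ht Hsub]; [| exact Hc |].
  - apply large_img_pstab with mul one inv; auto. apply pstab_inv with mul one; auto.
  - split.
    + apply pstab_inv with mul one; auto.
    + apply subset_img_inv with mul one; auto.
Qed.

Lemma next_position_sound : sound S (next_position p c).
Proof.
  destruct absorber_spec as (He & Hr_abs & Hf_abs).
  destruct answer_spec as [_ Hans].
  destruct Hp as (HU & Hr & _).
  destruct (reserve_spec _ I_covered_union_spare) as [_ Hfl].
  set (e := absorber p) in *.
  assert (Hr1 : subset (img act (inv e) (spare p)) (spare p))
    by (apply subset_img_inv with mul one; auto).
  split; [| split]; simpl.
  - intros x [Hx | Hx]; [apply HU, Hx | apply Hr, Hr1, Hans, Hx].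
  - intros x Hx. apply Hr. revert x Hx.
    apply subset_img_inv with mul one; auto.
  - eapply large_subset_l; [| apply large_img with mul one inv; eauto].
    intros x [Hx | Hx].
    + apply img_mono with (a := covered p); [intros y Hy; left; exact Hy |].
      apply pstab_subset_img; [apply pstab_inv with mul one; auto | exact Hx].
    + apply img_mono with (a := spare p); [intros y Hy; right; exact Hy |].
      apply Hans, Hx.
Qed.

End Step.

Fixpoint position_at (a : nat -> X -> Prop) (n : nat) : position :=
  match n with
  | 0 => Position (a 0) (reserve (a 0))
  | S n => next_position (position_at a n) (a (S n))
  end.

Definition answer_at (a : nat -> X -> Prop) (n : nat) : G :=
  match n with
  | 0 => one
  | S n => answer (position_at a n) (a (S n))
  end.

Definition placed (a : nat -> X -> Prop) (n : nat) : X -> Prop :=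
  fun x => exists m, m < n /\ img act (answer_at a m) (a m) x.

Lemma placed_subset_covered a n : subset (placed a (S n)) (covered (position_at a n)).
Proof.
  induction n as [| n IH]; intros x [m [Hm [y [Hy ->]]]].
  - assert (m = 0) as -> by lia. simpl. rewrite (proj1 Hact). exact Hy.
  - destruct (Nat.eq_dec m (S n)) as [-> | Hne].
    + right. exists y. auto.
    + left. apply IH. exists m. split; [lia | exists y; auto].
Qed.

Section Run.

Variable a : nat -> X -> Prop.
Hypothesis Ha : forall n, I (a n).

Definition arena : X -> Prop := union (a 0) (reserve (a 0)).

Lemma I_arena : I arena.
Proof. apply I_union; [| apply reserve_spec]; apply Ha. Qed.

Lemma position_at_sound n : sound arena (position_at a n).
Proof.
  induction n as [| n IH].
  - split; [| split]; simpl.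
    + intros x Hx. left. exact Hx.
    + intros x Hx. right. exact Hx.
    + apply reserve_spec, Ha.
  - apply next_position_sound; [apply I_arena | exact IH | apply Ha].
Qed.

Lemma answer_at_pstab n : pstab act (placed a n) (answer_at a n).
Proof.
  destruct n as [| n]; intros x Hx.
  - destruct Hx as [m [Hm _]]. lia.
  - apply (answer_spec arena); [apply I_arena | apply position_at_sound | apply Ha |].
    apply placed_subset_covered, Hx.
Qed.

Lemma I_placed_all : I (fun x => exists n, img act (answer_at a n) (a n) x).
Proof.
  apply I_subset with arena; [| apply I_arena].
  intros x [n Hx].
  apply (proj1 (position_at_sound n)), (placed_subset_covered a n).
  exists n. split; [lia | exact Hx].
Qed.

Lemma answers_win (gam : nat -> G) : (forall n, gam n = answer_at a n) ->
  gam 0 = one /\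
  (forall n, pstab act (fun x => exists m, m < n /\ img act (gam m) (a m) x) (gam n)) /\
  I (fun x => exists n, img act (gam n) (a n) x).
Proof.
  intros Hgam. split; [| split].
  - apply Hgam.
  - intros n x [m [Hm Hx]]. rewrite Hgam.
    apply answer_at_pstab. exists m. rewrite <- Hgam. auto.
  - apply I_subset with (2 := I_placed_all).
    intros x [n Hx]. exists n. rewrite <- Hgam. exact Hx.
Qed.

End Run.

Lemma position_at_ext a a' n :
  (forall i, i <= n -> a i = a' i) -> position_at a n = position_at a' n.
Proof.
  induction n as [| n IH]; intros H; simpl.
  - rewrite (H 0) by lia. reflexivity.
  - rewrite IH by (intros; apply H; lia).
    rewrite (H (S n)) by lia. reflexivity.
Qed.

Lemma answer_at_ext a a' n :
  (forall i, i <= n -> a i = a' i) -> answer_at a n = answer_at a' n.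
Proof.
  destruct n as [| n]; intros H; simpl; [reflexivity |].
  rewrite (position_at_ext a a' n) by (intros; apply H; lia).
  rewrite (H (S n)) by lia. reflexivity.
Qed.

Definition strategy : strategyII G X :=
  fun l => answer_at (fun i => nth i l (fun _ => False)) (pred (length l)).

Lemma strategy_history a n : strategy (history a n) = answer_at a n.
Proof.
  unfold strategy, history. rewrite length_map, length_seq.
  apply answer_at_ext. intros i Hi.
  rewrite nth_indep with (d' := a 0) by (rewrite length_map, length_seq; lia).
  rewrite map_nth, seq_nth by lia. reflexivity.
Qed.

End Strategy.

Theorem mainTheorem9 (G X : Type) (mul : G -> G -> G) (one : G) (inv : G -> G)
  (act : G -> X -> X) (I : (X -> Prop) -> Prop) :
  dynamical_ideal mul one inv act I ->
  cofinal_orbits act I ->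
  exists sigma : strategyII G X, winningII one act I sigma.
Proof.
  intros (Hgroup & Hact & Hideal & _ & I_img) Hcofinal.
  exists (strategy G X one inv act I).
  intros a Ha.
  apply (answers_win G X mul one inv act I Hgroup Hact Hideal I_img Hcofinal a Ha).
  intros n. apply strategy_history.
Qed.
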